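(* Let $X$ be a spectral space. The map $\varphi':X^{\mathrm{inv}}\to\mathcal X'(X)^{\mathrm{zar}}$, $x\mapsto \mathrm{Cl}(\{x\})$, is a topological embedding.
   Context: For a spectral space $X$, $\mathrm{Cl}$ denotes closure in its given topology, and $X^{\mathrm{inv}}$ is $X$ with the inverse topology, i.e. the topology having the quasi-compact open subsets of $X$ as a basis of closed sets. $\mathcal X'(X)$ is the set of nonempty closed subsets of $X$; its Zariski topology has as basis of open sets the sets $\mathcal U'(\Omega):=\{Y\in\mathcal X'(X)\mid Y\cap\Omega=\emptyset\}$, where $\Omega$ ranges over quasi-compact open subsets of $X$. *)

From Stdlib Require Import List Classical FunctionalExtensionality PropExtensionality.
Set Implicit Arguments.

Record topology (X : Type) := {
  is_open : (X -> Prop) -> Prop;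
  open_full : is_open (fun _ => True);
  open_inter : forall U V, is_open U -> is_open V -> is_open (fun x => U x /\ V x);
  open_union : forall F : (X -> Prop) -> Prop,
      (forall U, F U -> is_open U) -> is_open (fun x => exists U, F U /\ U x)
}.

Section Topo.
Variables (X : Type) (T : topology X).

Definition closed (C : X -> Prop) : Prop := is_open T (fun x => ~ C x).

Definition closure (A : X -> Prop) : X -> Prop :=
  fun x => forall C, closed C -> (forall y, A y -> C y) -> C x.

Definition quasi_compact (K : X -> Prop) : Prop :=
  forall F : (X -> Prop) -> Prop,
    (forall U, F U -> is_open T U) ->
    (forall x, K x -> exists U, F U /\ U x) ->
    exists l : list (X -> Prop),
      (forall U, In U l -> F U) /\ (forall x, K x -> exists U, In U l /\ U x).

Definition qc_open (U : X -> Prop) : Prop := is_open T U /\ quasi_compact U.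

Definition irreducible_closed (C : X -> Prop) : Prop :=
  closed C /\ (exists x, C x) /\
  forall C1 C2, closed C1 -> closed C2 ->
    (forall x, C x -> C1 x \/ C2 x) ->
    (forall x, C x -> C1 x) \/ (forall x, C x -> C2 x).

(* Hochster's characterization of spectral spaces: T0, quasi-compact,
   quasi-compact opens closed under finite intersection and forming a basis,
   every irreducible closed subset has a (necessarily unique, by T0) generic point. *)
Definition spectral : Prop :=
  (forall x y, (forall U, is_open T U -> (U x <-> U y)) -> x = y) /\
  quasi_compact (fun _ => True) /\
  (forall U V, qc_open U -> qc_open V -> qc_open (fun x => U x /\ V x)) /\
  (forall U x, is_open T U -> U x ->
     exists V, qc_open V /\ V x /\ forall y, V y -> U y) /\
  (forall C, irreducible_closed C ->
     exists x, forall y, C y <-> closure (fun z => z = x) y).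

(* Open sets of X^inv: the topology whose closed sets are intersections of
   quasi-compact opens, i.e. opens are unions of complements of qc opens. *)
Definition inv_open (U : X -> Prop) : Prop :=
  forall x, U x -> exists O, qc_open O /\ ~ O x /\ forall y, ~ O y -> U y.

Definition Xprime : Type := { Y : X -> Prop | closed Y /\ exists y, Y y }.

Definition U' (O : X -> Prop) : Xprime -> Prop :=
  fun Y => forall y, proj1_sig Y y -> ~ O y.

Definition zar_open (W : Xprime -> Prop) : Prop :=
  forall Y, W Y -> exists O, qc_open O /\ U' O Y /\ forall Y', U' O Y' -> W Y'.

Lemma closure_closed (A : X -> Prop) : closed (closure A).
Proof.
  unfold closed.
  set (F := fun U : X -> Prop =>
              exists C, closed C /\ (forall y, A y -> C y) /\ U = (fun x => ~ C x)).
  assert (HF : forall U, F U -> is_open T U).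
  { intros U [C [HC [_ ->]]]. exact HC. }
  assert (E : (fun x => ~ closure A x) = (fun x => exists U, F U /\ U x)).
  { apply functional_extensionality; intro x; apply propositional_extensionality.
    split.
    - intro H. apply not_all_ex_not in H. destruct H as [C H].
      apply imply_to_and in H. destruct H as [HC H].
      apply imply_to_and in H. destruct H as [HA H].
      exists (fun x => ~ C x). split; [exists C; auto | exact H].
    - intros [U [[C [HC [HA ->]]] HU]] Hcl. apply HU, Hcl; assumption. }
  rewrite E. apply open_union. exact HF.
Qed.

Lemma in_closure_point (x : X) : closure (fun z => z = x) x.
Proof. intros C _ H. apply H; reflexivity. Qed.

Definition phi' (x : X) : Xprime :=
  exist _ (closure (fun z => z = x))
        (conj (closure_closed (fun z => z = x)) (@ex_intro X (closure (fun z => z = x)) x (in_closure_point (x:=x)))).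

End Topo.

(* Topological embedding, with topologies given by their open-set predicates:
   injective, continuous, and every open of the source is the preimage of an
   open of the target (i.e. homeomorphism onto the image with subspace topology). *)
Definition embedding {A B : Type} (openA : (A -> Prop) -> Prop)
  (openB : (B -> Prop) -> Prop) (f : A -> B) : Prop :=
  (forall a1 a2, f a1 = f a2 -> a1 = a2) /\
  (forall V, openB V -> openA (fun a => V (f a))) /\
  (forall U, openA U -> exists V, openB V /\ forall a, U a <-> V (f a)).

(* The preimage of a basic Zariski open U'(O) under x |-> Cl({x}) is exactly the
   complement of O, since the closed set X \ O contains Cl({x}) iff it contains x.
   These complements form a basis of X^inv, so phi' is continuous and open onto its
   image; injectivity is the T0 axiom, as Cl({x}) determines the opens containing x. *)
From Stdlib Require Import Classical FunctionalExtensionality PropExtensionality.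

Section ClosurePoint.
Context {X : Type} (T : topology X).

Lemma closed_compl_open {O : X -> Prop} : is_open T O -> closed T (fun x => ~ O x).
Proof.
  intros HO. unfold closed.
  replace (fun x => ~ ~ O x) with O; [exact HO |].
  apply functional_extensionality; intro x; apply propositional_extensionality.
  split; [tauto | apply NNPP].
Qed.

Lemma closure_point_compl_open {O : X -> Prop} {x y : X} :
  is_open T O -> ~ O x -> closure T (fun z => z = x) y -> ~ O y.
Proof.
  intros HO Hx Hy. apply Hy; [exact (closed_compl_open HO) |].
  intros z ->; exact Hx.
Qed.

Lemma U'_phi'E {O : X -> Prop} (x : X) : is_open T O -> U' O (phi' T x) <-> ~ O x.
Proof.
  intros HO; split.
  - intros H. apply H, in_closure_point.
  - intros Hx y. exact (closure_point_compl_open HO Hx).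
Qed.

Lemma phi'_inj :
  (forall x y, (forall U, is_open T U -> (U x <-> U y)) -> x = y) ->
  forall x1 x2, phi' T x1 = phi' T x2 -> x1 = x2.
Proof.
  intros HT0 x1 x2 Heq.
  assert (Hcl : closure T (fun z => z = x1) = closure T (fun z => z = x2))
    by exact (f_equal (@proj1_sig _ _) Heq).
  apply HT0; intros U HU; split; intros HUx; apply NNPP; intros HnU.
  - refine (closure_point_compl_open HU HnU _ HUx).
    rewrite <- Hcl; apply in_closure_point.
  - refine (closure_point_compl_open HU HnU _ HUx).
    rewrite Hcl; apply in_closure_point.
Qed.

Lemma zar_open_preimage_phi' (W : Xprime T -> Prop) :
  zar_open W -> inv_open T (fun x => W (phi' T x)).
Proof.
  intros HW x Hx.
  destruct (HW _ Hx) as [O [HO [HOx HOW]]].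
  exists O; split; [exact HO | split].
  - exact (proj1 (U'_phi'E x (proj1 HO)) HOx).
  - intros y Hy. exact (HOW _ (proj2 (U'_phi'E y (proj1 HO)) Hy)).
Qed.

Definition zar_hull (U : X -> Prop) : Xprime T -> Prop :=
  fun Y => exists O, qc_open T O /\ U' O Y /\ forall y, ~ O y -> U y.

Lemma zar_open_hull (U : X -> Prop) : zar_open (zar_hull U).
Proof.
  intros Y [O [HO [HY HOU]]].
  exists O; split; [exact HO | split; [exact HY |]].
  intros Y' HY'; exists O; auto.
Qed.

Lemma inv_open_preimage_hull {U : X -> Prop} :
  inv_open T U -> forall x, U x <-> zar_hull U (phi' T x).
Proof.
  intros HU x; split.
  - intros Hx. destruct (HU x Hx) as [O [HO [HnOx HOU]]].
    exists O; split; [exact HO | split; [| exact HOU]].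
    exact (proj2 (U'_phi'E x (proj1 HO)) HnOx).
  - intros [O [HO [HY HOU]]]. exact (HOU x (proj1 (U'_phi'E x (proj1 HO)) HY)).
Qed.

End ClosurePoint.

Theorem mainTheorem14 (X : Type) (T : topology X) (HX : spectral T) :
  embedding (inv_open T) (@zar_open X T) (phi' T).
Proof.
  destruct HX as [HT0 _].
  split; [exact (phi'_inj T HT0) | split].
  - exact (zar_open_preimage_phi' T).
  - intros U HU. exists (zar_hull T U).
    split; [apply zar_open_hull | exact (inv_open_preimage_hull T HU)].
Qed.
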